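(* Let $(X,*,\circ)$ be a left skew brace and $U,V\subseteq X$ sub-skew braces. The following are equivalent: (1) $[U,V]=0$, i.e. there exists a skew brace morphism $\varphi\colon U\times V\to X$ with $\varphi(u,1)=u$ and $\varphi(1,v)=v$ for all $u\in U$, $v\in V$; (2) for all $(u,v)\in U\times V$ we have $u\circ v=u*v$, and this restricted operation is commutative, i.e. $u*v=v*u$ and $u\circ v=v\circ u$; (3) for all $(u,v)\in U\times V$, $\lambda_u(v)=v$, every element of $U$ commutes with every element of $V$ in the group $(X,* )$, and every element of $U$ commutes with every element of $V$ in the group $(X,\circ)$. Consequently, an abelian object of $\mathsf{SKB}$ (a skew brace $X$ with $[X,X]=0$) is necessarily of the form $(A,+,+)$ with $(A,+)$ an abelian group.
   Context: A (left) skew brace is a triple $(A,*,\circ)$ with $(A,* )$ and $(A,\circ)$ groups such that $a\circ(b*c)=(a\circ b)*a^{-*}*(a\circ c)$ for all $a,b,c\in A$; $a^{-*}$ denotes the inverse in $(A,* )$. The two groups share the identity $1$. Morphisms are maps that are homomorphisms for both operations; products of skew braces are taken componentwise. For $a,u\in A$ put $\lambda_a(u)=a^{-*}*(a\circ u)$. $\mathsf{SKB}$ denotes the category of left skew braces. *)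

Record is_group {A : Type} (op : A -> A -> A) (e : A) (inv : A -> A) : Prop := {
  grp_assoc : forall a b c, op a (op b c) = op (op a b) c;
  grp_idl : forall a, op e a = a;
  grp_idr : forall a, op a e = a;
  grp_invl : forall a, op (inv a) a = e;
  grp_invr : forall a, op a (inv a) = e
}.

Record skew_brace : Type := {
  sb_car :> Type;
  sb_star : sb_car -> sb_car -> sb_car;
  sb_circ : sb_car -> sb_car -> sb_car;
  sb_one : sb_car;
  sb_invs : sb_car -> sb_car;
  sb_invc : sb_car -> sb_car;
  sb_star_group : is_group sb_star sb_one sb_invs;
  sb_circ_group : is_group sb_circ sb_one sb_invc;
  sb_compat : forall a b c,
    sb_circ a (sb_star b c) = sb_star (sb_star (sb_circ a b) (sb_invs a)) (sb_circ a c)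
}.

Arguments sb_star {_}.
Arguments sb_circ {_}.
Arguments sb_one {_}.
Arguments sb_invs {_}.
Arguments sb_invc {_}.

Definition sb_lambda {X : skew_brace} (a u : X) : X :=
  sb_star (sb_invs a) (sb_circ a u).

Record is_sub_skew_brace {X : skew_brace} (U : X -> Prop) : Prop := {
  sub_one : U sb_one;
  sub_star : forall a b, U a -> U b -> U (sb_star a b);
  sub_invs : forall a, U a -> U (sb_invs a);
  sub_circ : forall a b, U a -> U b -> U (sb_circ a b);
  sub_invc : forall a, U a -> U (sb_invc a)
}.

(* [U,V] = 0 : there is a skew brace morphism phi : U x V -> X (product with
   componentwise operations) with phi(u,1) = u and phi(1,v) = v.
   phi is represented as a curried function X -> X -> X of which only the
   values on U x V matter. *)
Definition commute_sub {X : skew_brace} (U V : X -> Prop) : Prop :=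
  exists phi : X -> X -> X,
    (forall u1 u2 v1 v2, U u1 -> U u2 -> V v1 -> V v2 ->
       phi (sb_star u1 u2) (sb_star v1 v2) = sb_star (phi u1 v1) (phi u2 v2)) /\
    (forall u1 u2 v1 v2, U u1 -> U u2 -> V v1 -> V v2 ->
       phi (sb_circ u1 u2) (sb_circ v1 v2) = sb_circ (phi u1 v1) (phi u2 v2)) /\
    (forall u, U u -> phi u sb_one = u) /\
    (forall v, V v -> phi sb_one v = v).

From Stdlib Require Import Setoid.

(* A two-variable map phi that is multiplicative on U x V and
   restricts to the identity on both factors must be phi(u, v) = u v = v u,
   by factoring (u, v) as (u, 1)(1, v) and as (1, v)(u, 1); applied to both
   group structures this gives (1) => (2).  Conversely, if u o v = u * v and
   U, V centralize each other for * and o, then phi := * is a morphism for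
   both operations.  (2) <=> (3) because lambda_u(v) = v says exactly
   u o v = u * v. *)

Section GroupFacts.

Variables (A : Type) (op : A -> A -> A) (e : A) (inv : A -> A).
Hypothesis G : is_group op e inv.

Lemma grp_mulKg (a b : A) : op (inv a) (op a b) = b.
Proof.
  rewrite (grp_assoc _ _ _ G), (grp_invl _ _ _ G), (grp_idl _ _ _ G).
  reflexivity.
Qed.

Lemma grp_mulKVg (a b : A) : op a (op (inv a) b) = b.
Proof.
  rewrite (grp_assoc _ _ _ G), (grp_invr _ _ _ G), (grp_idl _ _ _ G).
  reflexivity.
Qed.

Lemma grp_mul_interchange (a b c d : A) :
  op b c = op c b -> op (op a b) (op c d) = op (op a c) (op b d).
Proof.
  intro Hbc.
  rewrite <- !(grp_assoc _ _ _ G), (grp_assoc _ _ _ G b c d), Hbc.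
  rewrite <- (grp_assoc _ _ _ G c b d). reflexivity.
Qed.

Definition pair_hom (U V : A -> Prop) (phi : A -> A -> A) : Prop :=
  forall u1 u2 v1 v2, U u1 -> U u2 -> V v1 -> V v2 ->
    phi (op u1 u2) (op v1 v2) = op (phi u1 v1) (phi u2 v2).

Section PairHom.

Variables (U V : A -> Prop) (phi : A -> A -> A).
Hypotheses (Ue : U e) (Ve : V e) (phi_hom : pair_hom U V phi).
Hypotheses (phi_u1 : forall u, U u -> phi u e = u)
           (phi_1v : forall v, V v -> phi e v = v).

Lemma pair_hom_eq_mul (u v : A) : U u -> V v -> phi u v = op u v.
Proof.
  intros Uu Vv.
  rewrite <- (grp_idr _ _ _ G u) at 1. rewrite <- (grp_idl _ _ _ G v) at 1.
  rewrite phi_hom, phi_u1, phi_1v by assumption. reflexivity.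
Qed.

Lemma pair_hom_eq_mulC (u v : A) : U u -> V v -> phi u v = op v u.
Proof.
  intros Uu Vv.
  rewrite <- (grp_idl _ _ _ G u) at 1. rewrite <- (grp_idr _ _ _ G v) at 1.
  rewrite phi_hom, phi_u1, phi_1v by assumption. reflexivity.
Qed.

End PairHom.

End GroupFacts.

Section SkewBrace.

Variable X : skew_brace.

Let GS := sb_star_group X.
Let GC := sb_circ_group X.

Definition abelian_sum_on (U V : X -> Prop) : Prop :=
  forall u v, U u -> V v ->
    sb_circ u v = sb_star u v /\ sb_star u v = sb_star v u /\
    sb_circ u v = sb_circ v u.

Definition lambda_trivial_centralizing (U V : X -> Prop) : Prop :=
  forall u v, U u -> V v ->
    sb_lambda u v = v /\ sb_star u v = sb_star v u /\
    sb_circ u v = sb_circ v u.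

Lemma sb_lambda_fixed (a b : X) : sb_lambda a b = b <-> sb_circ a b = sb_star a b.
Proof.
  unfold sb_lambda. split; intro E.
  - rewrite <- E at 2. symmetry. apply (grp_mulKVg _ _ _ _ GS).
  - rewrite E. apply (grp_mulKg _ _ _ _ GS).
Qed.

Lemma abelian_sum_onE (U V : X -> Prop) :
  abelian_sum_on U V <-> lambda_trivial_centralizing U V.
Proof.
  split; intros H u v Uu Vv; destruct (H u v Uu Vv) as [E Ecomm];
    split; try exact Ecomm; apply sb_lambda_fixed; exact E.
Qed.

Lemma commute_sub_abelian_sum (U V : X -> Prop) :
  U sb_one -> V sb_one -> commute_sub U V -> abelian_sum_on U V.
Proof.
  intros U1 V1 [phi [Hstar [Hcirc [Hu1 H1v]]]] u v Uu Vv.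
  pose proof (pair_hom_eq_mul _ _ _ _ GS U V phi U1 V1 Hstar Hu1 H1v u v Uu Vv).
  pose proof (pair_hom_eq_mulC _ _ _ _ GS U V phi U1 V1 Hstar Hu1 H1v u v Uu Vv).
  pose proof (pair_hom_eq_mul _ _ _ _ GC U V phi U1 V1 Hcirc Hu1 H1v u v Uu Vv).
  pose proof (pair_hom_eq_mulC _ _ _ _ GC U V phi U1 V1 Hcirc Hu1 H1v u v Uu Vv).
  repeat split; congruence.
Qed.

Lemma abelian_sum_commute_sub (U V : X -> Prop) :
  is_sub_skew_brace U -> is_sub_skew_brace V ->
  abelian_sum_on U V -> commute_sub U V.
Proof.
  intros SU SV H. exists sb_star. repeat split.
  - intros u1 u2 v1 v2 Uu1 Uu2 Vv1 Vv2.
    apply (grp_mul_interchange _ _ _ _ GS). apply H; assumption.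
  - intros u1 u2 v1 v2 Uu1 Uu2 Vv1 Vv2.
    assert (Uu : U (sb_circ u1 u2)) by (apply sub_circ; assumption).
    assert (Vv : V (sb_circ v1 v2)) by (apply sub_circ; assumption).
    destruct (H _ _ Uu Vv) as [<- _].
    destruct (H _ _ Uu1 Vv1) as [<- _].
    destruct (H _ _ Uu2 Vv2) as [<- _].
    apply (grp_mul_interchange _ _ _ _ GC). apply H; assumption.
  - intros u _. apply (grp_idr _ _ _ GS).
  - intros v _. apply (grp_idl _ _ _ GS).
Qed.

End SkewBrace.

Theorem proposition3p9 (X : skew_brace) :
  (forall U V : X -> Prop, is_sub_skew_brace U -> is_sub_skew_brace V ->
     (commute_sub U V <->
        (forall u v, U u -> V v ->
           sb_circ u v = sb_star u v /\ sb_star u v = sb_star v u /\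
           sb_circ u v = sb_circ v u)) /\
     ((forall u v, U u -> V v ->
           sb_circ u v = sb_star u v /\ sb_star u v = sb_star v u /\
           sb_circ u v = sb_circ v u) <->
        (forall u v, U u -> V v ->
           sb_lambda u v = v /\ sb_star u v = sb_star v u /\
           sb_circ u v = sb_circ v u))) /\
  (commute_sub (fun _ : X => True) (fun _ : X => True) ->
     (forall a b : X, sb_circ a b = sb_star a b) /\
     (forall a b : X, sb_star a b = sb_star b a)).
Proof.
  split.
  - intros U V SU SV. split; [split | apply abelian_sum_onE].
    + apply commute_sub_abelian_sum; apply sub_one; assumption.
    + apply abelian_sum_commute_sub; assumption.
  - intro H.
    pose proof (commute_sub_abelian_sum X _ _ I I H) as Habel.
    split; intros a b; apply (Habel a b I I).
Qed.
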